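(* Let $C$ be a set of colors and $\sqsubseteq$ any preference relation on $C^\omega$. For any positive integers $n,q$, any $n$-node arena $\mathcal{A}$ over $C$, and any $q$-state strategy $S_1$ of Player 0 in $\mathcal{A}$, there exists a chromatic $(qn+1)^n$-state strategy $S_2$ of Player 0 in $\mathcal{A}$ such that for every node $v$ of $\mathcal{A}$, $S_2$ is at least as good as $S_1$ w.r.t. $\sqsubseteq$ from $v$.
   Context: A preference relation is a total preorder $\sqsubseteq$ on $C^\omega$. An arena over $C$ is a tuple $\mathcal{A} = \langle V, V_0, V_1, E\rangle$ of finite sets with $V = V_0 \sqcup V_1$, $E \subseteq V \times C \times V$, and every node having at least one outgoing edge; for $e=(s,c,t)$ write $\mathsf{source}(e)=s$, $\mathsf{col}(e)=c$, $\mathsf{target}(e)=t$. A path is a nonempty finite or infinite sequence of edges $e_1e_2\ldots$ with $\mathsf{target}(e_i)=\mathsf{source}(e_{i+1})$; for each node $v$ there is also a $0$-length path $\lambda_v$ with source and target $v$. $\mathsf{col}$ extends letterwise to sequences of edges. A strategy of Player 0 is a function $S$ assigning to each finite path $p$ with $\mathsf{target}(p)\in V_0$ an edge $S(p)$ with $\mathsf{source}(S(p))=\mathsf{target}(p)$. A path $p=e_1e_2\ldots$ is consistent with $S$ if (when $\mathsf{source}(p)\in V_0$) $e_1=S(\lambda_{\mathsf{source}(p)})$ and for each $1\le i<|p|$ with $\mathsf{target}(e_i)\in V_0$ we have $e_{i+1}=S(e_1\ldots e_i)$. For $v\in V$, $\mathsf{col}(S,v)\subseteq C^\omega$ is the set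 of $\mathsf{col}(p)$ over all infinite paths $p$ from $v$ consistent with $S$. A strategy $S_2$ is at least as good as $S_1$ w.r.t. $\sqsubseteq$ from $v$ if for every $\beta\in\mathsf{col}(S_2,v)$ there exists $\alpha\in\mathsf{col}(S_1,v)$ with $\alpha\sqsubseteq\beta$. A memory structure is $\mathcal{M}=\langle M, m_{init},\delta\rangle$ with $M$ finite, $m_{init}\in M$, $\delta: M\times E\to M$ (extended to finite edge sequences in the usual way). $S$ is an $\mathcal{M}$-strategy if for all finite paths $p_1,p_2$ with $\mathsf{target}(p_1)=\mathsf{target}(p_2)\in V_0$, $\delta(m_{init},p_1)=\delta(m_{init},p_2)$ implies $S(p_1)=S(p_2)$. $\mathcal{M}$ is chromatic if there is $\sigma: M\times C\to M$ with $\delta(m,e)=\sigma(m,\mathsf{col}(e))$ for all $m,e$. A (chromatic) $q$-state strategy is an $\mathcal{M}$-strategy for some (chromatic) memory structure $\mathcal{M}$ with $|M|=q$. *)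

From mathcomp Require Import all_boot.
Set Implicit Arguments. Unset Strict Implicit. Unset Printing Implicit Defensive.

(* The map
   e |-> (src e, col e, tgt e) is required injective, so E is (isomorphic to)
   a finite subset of V x C x V, and every node has an outgoing edge. *)
Record arena (C : Type) := Arena {
  Vt : finType;
  V0 : {set Vt};
  Et : finType;
  src : Et -> Vt;
  col : Et -> C;
  tgt : Et -> Vt;
  edge_inj : forall e1 e2, src e1 = src e2 -> col e1 = col e2 ->
                           tgt e1 = tgt e2 -> e1 = e2;
  out_edge : forall v, exists e, src e = v
}.

Section Arena.
Variables (C : Type) (A : arena C).
Local Notation V := (Vt A).
Local Notation E := (Et A).

(* A finite path is represented by its source node v and its list of edges;
   the empty list is the 0-length path lambda_v. *)
Fixpoint is_path (v : V) (es : seq E) : bool :=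
  if es is e :: es' then (src e == v) && is_path (tgt e) es' else true.

Fixpoint path_target (v : V) (es : seq E) : V :=
  if es is e :: es' then path_target (tgt e) es' else v.

Definition strategy := V -> seq E -> E.

Definition is_strategy (S : strategy) : Prop :=
  forall v es, is_path v es -> path_target v es \in V0 A ->
    src (S v es) = path_target v es.

Definition inf_path_from (v : V) (p : nat -> E) : Prop :=
  src (p 0) = v /\ forall i, tgt (p i) = src (p i.+1).

Definition prefix (p : nat -> E) (i : nat) : seq E := [seq p k | k <- iota 0 i].

(* consistency with S: whenever the next edge leaves a V0 node, it is the
   edge chosen by S on the prefix (for i = 0 this is S(lambda_v)). *)
Definition consistent (S : strategy) (v : V) (p : nat -> E) : Prop :=
  forall i, src (p i) \in V0 A -> p i = S v (prefix p i).

Definition col_set (S : strategy) (v : V) : (nat -> C) -> Prop :=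
  fun w => exists p, inf_path_from v p /\ consistent S v p /\ w = (fun i => col (p i)).

Definition at_least_as_good (pref : (nat -> C) -> (nat -> C) -> Prop)
  (S2 S1 : strategy) (v : V) : Prop :=
  forall beta, col_set S2 v beta -> exists alpha, col_set S1 v alpha /\ pref alpha beta.

Definition delta_star (M : Type) (delta : M -> E -> M) (m : M) (es : seq E) : M :=
  foldl delta m es.

Definition is_M_strategy (M : Type) (m_init : M) (delta : M -> E -> M)
  (S : strategy) : Prop :=
  forall v1 es1 v2 es2, is_path v1 es1 -> is_path v2 es2 ->
    path_target v1 es1 = path_target v2 es2 ->
    path_target v1 es1 \in V0 A ->
    delta_star delta m_init es1 = delta_star delta m_init es2 ->
    S v1 es1 = S v2 es2.

Definition chromatic (M : Type) (delta : M -> E -> M) : Prop :=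
  exists sigma : M -> C -> M, forall m e, delta m e = sigma m (col e).

Definition qstate_strategy (q : nat) (S : strategy) : Prop :=
  exists (M : finType) (m_init : M) (delta : M -> E -> M),
    #|M| = q /\ is_M_strategy m_init delta S.

Definition chromatic_qstate_strategy (q : nat) (S : strategy) : Prop :=
  exists (M : finType) (m_init : M) (delta : M -> E -> M),
    #|M| = q /\ chromatic delta /\ is_M_strategy m_init delta S.

End Arena.

Definition preference (C : Type) (pref : (nat -> C) -> (nat -> C) -> Prop) : Prop :=
  (forall a, pref a a) /\
  (forall a b c, pref a b -> pref b c -> pref a c) /\
  (forall a b, pref a b \/ pref b a).

From Stdlib Require Import ClassicalEpsilon Classical FunctionalExtensionality.
From Pilot Require Import Defs.
From mathcomp Require Import all_boot.
Set Implicit Arguments. Unset Strict Implicit. Unset Printing Implicit Defensive.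

(* Fix a memory structure (M, m0, delta) for S1.  For every node y the new
   memory stores at most one pair (s, m): a start s from which S1 has a
   consistent run reading the colours seen so far and ending in y with
   S1-memory m.  When several such runs arrive at y, one whose start is best
   for S1 (its outcomes are at least as good as those from the other starts)
   is kept.  This update reads only the colour, so the memory is chromatic and
   has (|V| |M| + 1)^|V| states; at y, S2 plays as S1 does in memory m.
   Along a play of S2 from v the start stored at the current node stays at
   least as good as v.  Some start s is stored infinitely often, so S1 has
   arbitrarily long consistent runs from s reading prefixes of the colours of
   the play; by Koenig's lemma the colours of the play form an outcome of S1
   from s, which is matched by an outcome of S1 from v. *)

Lemma eventually_uniform (T : finType) (Q : T -> nat -> Prop) :
  (forall x, exists N, forall k, N <= k -> Q x k) ->
  exists N, forall x k, N <= k -> Q x k.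
Proof.
move=> evQ; pose N x := proj1_sig (constructive_indefinite_description _ (evQ x)).
have QN x k : N x <= k -> Q x k := proj2_sig (constructive_indefinite_description _ (evQ x)) k.
exists (\max_x N x) => x k le_k; apply: QN.
by apply: leq_trans le_k; apply: leq_bigmax.
Qed.

Lemma finite_recurrent (T : finType) (f : nat -> T) :
  exists x, forall N, exists2 k, N <= k & f k = x.
Proof.
apply: NNPP => no_rec.
have evQ x : exists N, forall k, N <= k -> f k <> x.
  apply: NNPP => not_ev; apply: no_rec; exists x => N.
  by apply: NNPP => no_k; apply: not_ev; exists N => k le_Nk fk_x; apply: no_k; exists k.
have [N fN] := eventually_uniform evQ.
exact: fN (f N) N (leqnn N) erefl.
Qed.

Lemma exists_best (T : finType) (R : T -> T -> Prop) (P : T -> Prop) :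
  (forall x, R x x) -> (forall x y z, R x y -> R y z -> R x z) ->
  (forall x y, R x y \/ R y x) ->
  (exists x, P x) -> exists x, P x /\ forall y, P y -> R x y.
Proof.
move=> Rxx Rtrans Rtotal [x0 Px0].
suff [x [Px bestx]] : exists x, P x /\ forall y, y \in enum T -> P y -> R x y.
  by exists x; split=> // y; apply: bestx; rewrite mem_enum.
elim: (enum T) => [|a l [x [Px bestx]]]; first by exists x0.
have [[Pa Rax] | notbest_a] := classic (P a /\ R a x).
  exists a; split=> // y; rewrite inE => /predU1P [-> _ //| yl Py].
  exact: Rtrans Rax (bestx y yl Py).
exists x; split=> // y; rewrite inE => /predU1P [-> Pa | ]; last exact: bestx.
by case: (Rtotal x a) => // Rax; case: notbest_a.
Qed.

Section Koenig.
Variables (T : finType) (P : seq T -> Prop).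
Hypothesis P_prefix : forall s t, P (s ++ t) -> P s.
Hypothesis P_unbounded : forall N, exists s, size s = N /\ P s.

Definition extensible (s : seq T) := forall N, exists t, size t = N /\ P (s ++ t).

Lemma extensible_rcons s : extensible s -> exists x, extensible (rcons s x).
Proof.
move=> ext_s; apply: NNPP => no_x.
have evQ x : exists N, forall k, N <= k ->
    forall t, size t = k -> ~ P (rcons s x ++ t).
  apply: NNPP => not_ev; apply: no_x; exists x => N.
  apply: NNPP => no_t; apply: not_ev; exists N => k le_Nk t size_t Pt.
  apply: no_t; exists (take N t); split; first by rewrite size_takel ?size_t.
  by apply: (@P_prefix _ (drop N t)); rewrite -catA cat_take_drop.
have [N noP] := eventually_uniform evQ.
have [[|x t] [//= [size_t] Pxt]] := ext_s N.+1.
by apply: (noP x N (leqnn N) t size_t); rewrite cat_rcons.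
Qed.

Theorem exists_infinite_branch : exists f : nat -> T, forall k, P (mkseq f k).
Proof.
have [[|x0 s] [//= _ _]] := P_unbounded 1.
pose next s := epsilon (inhabits x0) (fun x => extensible (rcons s x)).
pose f k := next (iter k (fun s => rcons s (next s)) [::]).
have mkseq_f k : mkseq f k = iter k (fun s => rcons s (next s)) [::].
  by elim: k => [|k IHk] //; rewrite mkseqS IHk.
have ext_f k : extensible (mkseq f k).
  elim: k => [N | k IHk]; first exact: P_unbounded.
  rewrite mkseqS {2}/f -mkseq_f.
  exact: epsilon_spec (extensible_rcons IHk).
exists f => k; have [t [_ Pt]] := ext_f k 0.
exact: P_prefix Pt.
Qed.

End Koenig.

Section Outcomes.
Variables (C : Type) (pref : (nat -> C) -> (nat -> C) -> Prop).
Hypothesis pref_total_preorder : preference pref.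

Definition outcomes_as_good (Y X : (nat -> C) -> Prop) :=
  forall beta, Y beta -> exists alpha, X alpha /\ pref alpha beta.

Lemma outcomes_as_good_refl X : outcomes_as_good X X.
Proof. by case: pref_total_preorder => refl _ beta Xbeta; exists beta. Qed.

Lemma outcomes_as_good_trans Z Y X :
  outcomes_as_good Z Y -> outcomes_as_good Y X -> outcomes_as_good Z X.
Proof.
case: pref_total_preorder => _ [trans _] ZY YX gamma Zgamma.
have [beta [Ybeta pref_bg]] := ZY gamma Zgamma.
have [alpha [Xalpha pref_ab]] := YX beta Ybeta.
by exists alpha; split=> //; apply: trans pref_ab pref_bg.
Qed.

Lemma outcomes_as_good_total X Y : outcomes_as_good X Y \/ outcomes_as_good Y X.
Proof.
case: pref_total_preorder => _ [_ total].
have [|not_XY] := classic (outcomes_as_good X Y); first by left.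
right=> alpha Yalpha; apply: NNPP => no_beta; apply: not_XY => beta Xbeta.
exists alpha; split=> //; case: (total alpha beta) => // pref_ba.
by case: no_beta; exists beta.
Qed.

End Outcomes.

Section Paths.
Variables (C : Type) (A : arena C).
Local Notation V := (Vt A).
Local Notation E := (Et A).

Definition out_edge_of (x : V) : E :=
  proj1_sig (constructive_indefinite_description _ (out_edge x)).

Lemma src_out_edge_of x : src (out_edge_of x) = x.
Proof. exact: proj2_sig (constructive_indefinite_description _ (out_edge x)). Qed.

Lemma is_path_cat (v : V) (es1 es2 : seq E) :
  is_path v (es1 ++ es2) = is_path v es1 && is_path (path_target v es1) es2.
Proof. by elim: es1 v => [|e es1 IHes] v //=; rewrite IHes andbA. Qed.

Lemma path_target_cat (v : V) (es1 es2 : seq E) :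
  path_target v (es1 ++ es2) = path_target (path_target v es1) es2.
Proof. by elim: es1 v => [|e es1 IHes] v //=. Qed.

Lemma is_path_rcons (v : V) (es : seq E) e :
  is_path v (rcons es e) = is_path v es && (src e == path_target v es).
Proof. by rewrite -cats1 is_path_cat /= andbT. Qed.

Lemma path_target_rcons (v : V) (es : seq E) e : path_target v (rcons es e) = tgt e.
Proof. by rewrite -cats1 path_target_cat. Qed.

Lemma path_target_prefix (v : V) p t :
  inf_path_from v p -> path_target v (Defs.prefix p t) = src (p t).
Proof.
case=> src_p0 tgt_src; elim: t => [|t IHt]; first by rewrite src_p0.
by rewrite [Defs.prefix p _]mkseqS path_target_rcons tgt_src.
Qed.

End Paths.

Section MemoryMove.
Variables (C : Type) (A : arena C).
Local Notation V := (Vt A).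
Local Notation E := (Et A).
Variables (S1 : strategy A) (M : Type) (m0 : M) (dl : M -> E -> M).
Hypothesis S1_strategy : is_strategy S1.
Hypothesis S1_memory : is_M_strategy m0 dl S1.

Definition reaches (x : V) (m : M) (run : V * seq E) :=
  [/\ is_path run.1 run.2, path_target run.1 run.2 = x & delta_star dl m0 run.2 = m].

(* Well defined since S1 is an M-strategy; an arbitrary edge when no path
   reaches x with memory m. *)
Definition memory_move (x : V) (m : M) : E :=
  if excluded_middle_informative (exists run, reaches x m run) is left reach_xm
  then let run := proj1_sig (constructive_indefinite_description _ reach_xm) in
       S1 run.1 run.2
  else out_edge_of x.

Lemma memory_moveE s es :
  is_path s es -> path_target s es \in V0 A ->
  memory_move (path_target s es) (delta_star dl m0 es) = S1 s es.
Proof.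
move=> path_es V0_x; rewrite /memory_move.
case: excluded_middle_informative => [reach_xm | []]; last by exists (s, es).
case: constructive_indefinite_description => -[s' es'] [/= path' tgt' mem'].
by apply: S1_memory; rewrite ?tgt'.
Qed.

Lemma src_memory_move x m : x \in V0 A -> src (memory_move x m) = x.
Proof.
move=> V0_x; rewrite /memory_move.
case: excluded_middle_informative => [reach_xm | _]; last exact: src_out_edge_of.
case: constructive_indefinite_description => -[s es] [/= path_es tgt_es _]; subst x.
exact: S1_strategy.
Qed.

End MemoryMove.

Section ConsistentRuns.
Variables (C : Type) (A : arena C) (S1 : strategy A).
Local Notation V := (Vt A).
Local Notation E := (Et A).
Variables (beta : nat -> C) (s : V).

Definition consistent_run (es : seq E) :=
  is_path s es /\ forall es1 e es2, es = es1 ++ e :: es2 ->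
    col e = beta (size es1) /\ (src e \in V0 A -> e = S1 s es1).

Lemma consistent_run_nil : consistent_run [::].
Proof. by split=> // -[]. Qed.

Lemma consistent_run_rcons es e :
  consistent_run es -> src e = path_target s es -> col e = beta (size es) ->
  (src e \in V0 A -> e = S1 s es) -> consistent_run (rcons es e).
Proof.
move=> [path_es run_es] src_e col_e move_e.
split; first by rewrite is_path_rcons path_es src_e eqxx.
move=> es1 e' es2; case/lastP: es2 => [|es2 x].
  by rewrite cats1 => /rcons_inj [<- <-].
by rewrite -rcons_cons -rcons_cat => /rcons_inj [/run_es].
Qed.

Lemma consistent_run_catl es t : consistent_run (es ++ t) -> consistent_run es.
Proof.
move=> [path_est run_est]; split; first by move: path_est; rewrite is_path_cat => /andP [].
by move=> es1 e es2 es_eq; apply: run_est; rewrite es_eq -catA.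
Qed.

Lemma col_set_of_runs (p : nat -> E) :
  (forall k, consistent_run (mkseq p k)) -> col_set S1 s beta.
Proof.
move=> run_p.
have last_p i : col (p i) = beta i /\ (src (p i) \in V0 A -> p i = S1 s (mkseq p i)).
  have [_ run_i] := run_p i.+1.
  by rewrite -{2}(size_mkseq p i); apply: (run_i _ _ [::]); rewrite mkseqS cats1.
exists p; split; [split | split].
- by have [/= /andP [/eqP] ] := run_p 1.
- move=> i; have [] := run_p i.+2.
  by rewrite !mkseqS is_path_rcons path_target_rcons => /andP [_ /eqP].
- by move=> i /(proj2 (last_p i)).
- by apply: functional_extensionality => i; rewrite (proj1 (last_p i)).
Qed.

Lemma col_set_of_long_runs :
  (forall N, exists es, size es = N /\ consistent_run es) -> col_set S1 s beta.
Proof.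
move=> long_runs.
have [p run_p] := exists_infinite_branch consistent_run_catl long_runs.
exact: col_set_of_runs run_p.
Qed.

End ConsistentRuns.

Section Construction.
Variables (C : Type) (A : arena C).
Local Notation V := (Vt A).
Local Notation E := (Et A).
Variable pref : (nat -> C) -> (nat -> C) -> Prop.
Hypothesis pref_total_preorder : preference pref.
Variables (S1 : strategy A) (M : finType) (m0 : M) (dl : M -> E -> M).
Hypothesis S1_strategy : is_strategy S1.
Hypothesis S1_memory : is_M_strategy m0 dl S1.

Definition start_as_good (s s' : V) :=
  outcomes_as_good pref (col_set S1 s) (col_set S1 s').

Definition memory := {ffun V -> option (V * M)}.

Definition successor (g : memory) (c : C) (y : V) (sm : V * M) :=
  exists x m e, g x = Some (sm.1, m) /\
    [/\ src e = x, tgt e = y, col e = c,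
        x \in V0 A -> e = memory_move S1 m0 dl x m & sm.2 = dl m e].

Definition best_successor (g : memory) (c : C) (y : V) (o : option (V * M)) :=
  if o is Some sm then
    successor g c y sm /\ forall sm', successor g c y sm' -> start_as_good sm.1 sm'.1
  else forall sm, ~ successor g c y sm.

Definition select (g : memory) (c : C) (y : V) : option (V * M) :=
  epsilon (inhabits None) (best_successor g c y).

Lemma select_spec g c y : best_successor g c y (select g c y).
Proof.
apply: epsilon_spec.
have [has_succ | no_succ] := classic (exists sm, successor g c y sm); last first.
  by exists None => sm succ_sm; apply: no_succ; exists sm.
have [sm best_sm] := @exists_best _ (fun sm sm' => start_as_good sm.1 sm'.1) _
  (fun _ => @outcomes_as_good_refl _ _ pref_total_preorder _)
  (fun _ _ _ => @outcomes_as_good_trans _ _ pref_total_preorder _ _ _)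
  (fun _ _ => @outcomes_as_good_total _ _ pref_total_preorder _ _) has_succ.
by exists (Some sm).
Qed.

Definition update (g : memory) (c : C) : memory := [ffun y => select g c y].

Definition update_edge (g : memory) (e : E) : memory := update g (col e).

Definition memory_init : memory := [ffun x => Some (x, m0)].

Definition memory_after (es : seq E) : memory := delta_star update_edge memory_init es.

Definition S2 : strategy A := fun v es =>
  let x := path_target v es in
  if memory_after es x is Some (_, m) then memory_move S1 m0 dl x m else out_edge_of x.

Lemma S2_strategy : is_strategy S2.
Proof.
move=> v es _ V0_x; rewrite /S2.
case: (memory_after es _) => [[_ m]|]; [exact: src_memory_move | exact: src_out_edge_of].
Qed.

Lemma S2_chromatic_memory : chromatic_qstate_strategy ((#|V| * #|M|).+1 ^ #|V|) S2.
Proof.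
exists memory, memory_init, update_edge; split.
  by rewrite card_ffun card_option card_prod.
split; first by exists update.
by move=> v1 es1 v2 es2 _ _ tgt_eq _ mem_eq; rewrite /S2 tgt_eq /memory_after mem_eq.
Qed.

Definition tracks (beta : nat -> C) (t : nat) (g : memory) :=
  forall x s m, g x = Some (s, m) -> exists es,
    [/\ size es = t, consistent_run S1 beta s es, path_target s es = x
      & delta_star dl m0 es = m].

Lemma tracks_init beta : tracks beta 0 memory_init.
Proof.
move=> x s m; rewrite ffunE => -[<- <-].
by exists [::]; split=> //; apply: consistent_run_nil.
Qed.

Lemma tracks_update beta t g : tracks beta t g -> tracks beta t.+1 (update g (beta t)).
Proof.
move=> track_g y s m'; rewrite ffunE => select_y.
have := select_spec g (beta t) y; rewrite select_y => -[succ _].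
have [x [m [e [g_x [src_e tgt_e col_e move_e /= ->]]]]] := succ.
have [es [size_es run_es tgt_es mem_es]] := track_g _ _ _ g_x.
exists (rcons es e); split.
- by rewrite size_rcons size_es.
- apply: consistent_run_rcons => //; [by rewrite src_e | by rewrite col_e size_es |].
  rewrite src_e => V0_x; rewrite move_e // -tgt_es -mem_es.
  by apply: memory_moveE; [ | case: run_es | rewrite tgt_es].
- by rewrite path_target_rcons.
- by rewrite /delta_star foldl_rcons -/(delta_star dl m0 es) mem_es.
Qed.

Section Play.
Variables (v : V) (p : nat -> E).
Hypothesis p_path : inf_path_from v p.
Hypothesis p_S2 : consistent S2 v p.

Local Notation beta := (fun i => col (p i)).
Local Notation memory_at t := (memory_after (Defs.prefix p t)).

Lemma memory_after_prefixS t : memory_at t.+1 = update (memory_at t) (beta t).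
Proof. by rewrite /memory_after [Defs.prefix p _]mkseqS /delta_star foldl_rcons. Qed.

Lemma tracks_play t : tracks beta t (memory_at t).
Proof.
elim: t => [|t IHt]; first exact: tracks_init.
by rewrite memory_after_prefixS; apply: tracks_update.
Qed.

Lemma play_start_as_good t :
  exists s m, memory_at t (src (p t)) = Some (s, m) /\ start_as_good s v.
Proof.
elim: t => [|t [s [m [mem_t good_s]]]].
  case: p_path => src_p0 _; exists v, m0; rewrite /memory_after ffunE src_p0.
  by split=> //; apply: outcomes_as_good_refl.
have succ : successor (memory_at t) (beta t) (src (p t.+1)) (s, dl m (p t)).
  exists (src (p t)), m, (p t); split=> //; split=> //.
    by case: p_path.
  move=> V0_pt; rewrite {1}(p_S2 V0_pt) /S2 (path_target_prefix t p_path).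
  by rewrite mem_t.
rewrite memory_after_prefixS ffunE.
have := select_spec (memory_at t) (beta t) (src (p t.+1)).
case: select => [[s' m'] [_ best] | no_succ]; last by case: (no_succ _ succ).
exists s', m'; split=> //.
exact: @outcomes_as_good_trans _ _ pref_total_preorder _ _ _ (best _ succ) good_s.
Qed.

End Play.

Lemma S2_as_good v : at_least_as_good pref S2 S1 v.
Proof.
move=> beta [p [p_path [p_S2 ->]]].
pose start t := if memory_after (Defs.prefix p t) (src (p t)) is Some (s, _) then s else v.
have [s start_s] := finite_recurrent start.
suff : col_set S1 s (fun i => col (p i)).
  have [t _ start_t] := start_s 0.
  have [s' [m [mem_t good_s']]] := play_start_as_good p_path p_S2 t.
  by move: start_t; rewrite /start mem_t => <-; apply: good_s'.
apply: col_set_of_long_runs => N.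
have [t le_Nt start_t] := start_s N.
have [s' [m [mem_t _]]] := play_start_as_good p_path p_S2 t.
move: start_t; rewrite /start mem_t => s'_s; subst s'.
have [es [size_es run_es _ _]] := tracks_play mem_t.
exists (take N es); split; first by rewrite size_takel ?size_es.
by apply: (consistent_run_catl (t := drop N es)); rewrite cat_take_drop.
Qed.

End Construction.

Theorem corollary2 (C : Type) (pref : (nat -> C) -> (nat -> C) -> Prop)
  (Hpref : preference pref) (n q : nat) (Hn : 0 < n) (Hq : 0 < q)
  (A : arena C) (HV : #|Vt A| = n)
  (S1 : strategy A) (HS1 : is_strategy S1) (HS1q : qstate_strategy q S1) :
  exists S2 : strategy A,
    is_strategy S2 /\ chromatic_qstate_strategy ((q * n + 1) ^ n) S2 /\
    forall v : Vt A, at_least_as_good pref S2 S1 v.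
Proof.
have [M [m0 [dl [card_M S1_memory]]]] := HS1q.
exists (S2 pref S1 m0 dl); split; first exact: S2_strategy.
split; last by move=> v; apply: S2_as_good.
by rewrite -HV -card_M mulnC addn1; apply: S2_chromatic_memory.
Qed.
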